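(* Let $k \ge 3$ be an integer and let $G=(V,E)$ be a graph. Let $G'=(V',E')$ be the star with $V'=\{a\}\cup V$ (where $a\notin V$ is a new vertex) and $E'=\{(a,v): v\in V\}$, and let $P=\{(u,v): (u,v)\in E\}$. Then $G$ admits a proper vertex coloring using $k$ colors if and only if the edges of $G'$ can be colored using $k$ colors such that for every pair $(u,v)\in P$ there is a geodesic rainbow path between $u$ and $v$ in $G'$.
   Context: Edge colorings are not required to be proper. A path in an edge-colored graph is a rainbow path if no two of its edges have the same color. A geodesic path between $u$ and $v$ is a shortest path between $u$ and $v$. *)

From mathcomp Require Import all_boot.
Set Implicit Arguments. Unset Strict Implicit. Unset Printing Implicit Defensive.

Definition simple_graph (T : finType) (e : rel T) : Prop :=
  symmetric e /\ irreflexive e.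

Definition proper_vertex_coloring (T : finType) (e : rel T) (k : nat)
  (f : T -> 'I_k) : Prop :=
  forall x y, e x y -> f x != f y.

(* An edge coloring with k colors assigns a color to each unordered pair
   {x, y}; only its values on edges matter. A path from u is a sequence
   p of successive vertices (u :: p is an e-path); its edges are the
   consecutive pairs and its length is size p. *)
Definition is_path (T : finType) (e : rel T) (u v : T) (p : seq T) : bool :=
  path e u p && (last u p == v).

Definition edge_colors (T : finType) (k : nat) (c : {set T} -> 'I_k)
  (u : T) (p : seq T) : seq 'I_k :=
  pairmap (fun x y => c [set x; y]) u p.

Definition rainbow (T : finType) (k : nat) (c : {set T} -> 'I_k)
  (u : T) (p : seq T) : bool :=
  uniq (edge_colors c u p).

Definition geodesic (T : finType) (e : rel T) (u v : T) (p : seq T) : Prop :=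
  is_path e u v p /\ forall q, is_path e u v q -> size p <= size q.

Definition has_geodesic_rainbow_path (T : finType) (e : rel T) (k : nat)
  (c : {set T} -> 'I_k) (u v : T) : Prop :=
  exists p, geodesic e u v p /\ rainbow c u p.

(* The star over V: vertex set option V, new center a = None,
   edges {None, Some v} for v in V. *)
Definition star_rel (V : finType) : rel (option V) :=
  fun x y => ((x == None) && (y != None)) || ((y == None) && (x != None)).

From mathcomp Require Import all_boot.

(* In the star every two distinct leaves are at distance 2 and the only
   geodesic between them runs through the centre, so the geodesic is rainbow
   iff the two spokes get different colours: colourings of the spokes that
   make every edge of G rainbow-connected are exactly proper colourings of G. *)

Section Star.

Context {V : finType}.

Notation star := (@star_rel V).

Definition spoke_color {k} (c : {set option V} -> 'I_k) (v : V) : 'I_k :=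
  c [set None; Some v].

Definition spoke_coloring {k} (x0 : 'I_k) (f : V -> 'I_k) (S : {set option V}) : 'I_k :=
  if [pick v | Some v \in S] is Some v then f v else x0.

Lemma spoke_color_coloring k (x0 : 'I_k) f :
  spoke_color (spoke_coloring x0 f) =1 f.
Proof.
move=> v; rewrite /spoke_color /spoke_coloring; case: pickP => [w|].
  by rewrite !inE /= => /eqP [->].
by move/(_ v); rewrite !inE eqxx orbT.
Qed.

Lemma star_path_center (u v : V) :
  is_path star (Some u) (Some v) [:: None; Some v].
Proof. by rewrite /is_path /= /star_rel /= eqxx. Qed.

Lemma star_path_size_gt1 {u v : V} {q} :
  u != v -> is_path star (Some u) (Some v) q -> 1 < size q.
Proof.
move=> neq_uv; case: q => [|x [|y q]] //=; rewrite /is_path /=.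
- by move/eqP => [] /eqP; rewrite (negbTE neq_uv).
- by rewrite andbT; case: x.
Qed.

Lemma star_geodesic_center (u v : V) :
  u != v -> geodesic star (Some u) (Some v) [:: None; Some v].
Proof.
move=> neq_uv; split; first exact: star_path_center.
by move=> q; apply: star_path_size_gt1 neq_uv.
Qed.

Lemma star_geodesicE {u v : V} {p} :
  u != v -> geodesic star (Some u) (Some v) p -> p = [:: None; Some v].
Proof.
move=> neq_uv [path_p min_p].
have := min_p _ (star_path_center u v).
have := star_path_size_gt1 neq_uv path_p.
case: p path_p {min_p} => [|[x|] [|[y|] [|]]] //=.
by rewrite /is_path /= => /eqP [->].
Qed.

Lemma rainbow_star_center k (c : {set option V} -> 'I_k) (u v : V) :
  rainbow c (Some u) [:: None; Some v] = (spoke_color c u != spoke_color c v).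
Proof. by rewrite /rainbow /edge_colors /= inE andbT setUC. Qed.

Lemma star_geodesic_rainbowP {k} (c : {set option V} -> 'I_k) {u v : V} :
  u != v ->
  has_geodesic_rainbow_path star c (Some u) (Some v) <->
  spoke_color c u != spoke_color c v.
Proof.
move=> neq_uv; rewrite -rainbow_star_center; split.
  by move=> [p [/(star_geodesicE neq_uv) -> rainbow_p]].
by move=> rainbow_c; exists [:: None; Some v]; split; first exact: star_geodesic_center.
Qed.

End Star.

(* Only [0 < k] is used: it provides a default colour for sets containing no leaf. *)
Theorem lemma1 (k : nat) (V : finType) (e : rel V) :
  3 <= k -> simple_graph e ->
  (exists f : V -> 'I_k, proper_vertex_coloring e f) <->
  (exists c : {set option V} -> 'I_k,
     forall u v : V, e u v ->
       has_geodesic_rainbow_path (@star_rel V) c (Some u) (Some v)).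
Proof.
move=> k_ge3 [_ e_irr]; have k_gt0 : 0 < k by apply: leq_trans k_ge3.
have neq_e u v : e u v -> u != v by apply: contraTneq => ->; rewrite e_irr.
split=> [[f f_proper] | [c c_rainbow]].
- exists (spoke_coloring (Ordinal k_gt0) f) => u v e_uv.
  apply/(star_geodesic_rainbowP _ (neq_e _ _ e_uv)).
  by rewrite !spoke_color_coloring; apply: f_proper.
- exists (spoke_color c) => u v e_uv.
  exact/(star_geodesic_rainbowP _ (neq_e _ _ e_uv))/c_rainbow.
Qed.
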